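(* For every integer $n\ge1$, the sets $\mathcal T_n$ and $\mathcal T'_n$ are SW- and NE-deterministic. However, the sets $\mathcal T_n$ and $\mathcal T'_n$ are neither NW- nor SE-deterministic.
   Context: A set of Wang tiles is SW-deterministic if no two distinct tiles have the same bottom and left labels; NE-, NW-, SE-deterministic are defined analogously with (top, right), (top, left), (bottom, right) labels respectively. $V_n=\{(v_0,v_1,v_2)\in\mathbb{Z}^3: 0\le v_0\le v_1\le 1,\ v_1\le v_2\le n+1\}$, elements written as words $v_0v_1v_2$. A Wang tile is $t=(a,b,c,d)$ with $\mathrm{RIGHT}(t)=a$, $\mathrm{TOP}(t)=b$, $\mathrm{LEFT}(t)=c$, $\mathrm{BOTTOM}(t)=d$; $\hat t=(b,a,d,c)$, $\hat S=\{\hat t:t\in S\}$. Define (as (right, top, left, bottom)): $W_n=\{(11(i+1),11(j+1),11i,11j):1\le i,j\le n\}$; $b_n^i=(00(i+1),111,00i,11n)$, $B'_n=\{b_n^i:0\le i\le n\}$, $B_n=\{b_n^i:0\le i\le n-1\}$; $G_n=\{(01(i+1),111,00i,11(n+1)):0\le i\le n\}$; $Y_n=\{(01(i+1),112,01i,11(n+1)):1\le i\le n\}$; $A_n=\{(00(i+1),112,01i,11n):1\le i\le n\}$; $j_n^{k,l,r,s}=((0,k,l),(0,r,s),(0,s,r+n),(0,l,k+n))$ for $(k,l),(r,s)\in\{(0,0),(0,1),(1,1)\}$; $J'_n$ is the set of these 9 tiles and $J_n=J'_n\setminus\{j_n^{0,0,1,1},j_n^{1,1,0,0}\}$. $\mathcal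 T'_n=W_n\cup B'_n\cup G_n\cup Y_n\cup A_n\cup\hat B'_n\cup\hat G_n\cup\hat Y_n\cup\hat A_n\cup J'_n$ and $\mathcal T_n=W_n\cup B_n\cup G_n\cup Y_n\cup\hat B_n\cup\hat G_n\cup\hat Y_n\cup J_n$. *)

(* labels are words v0v1v2 represented as triples of naturals. *)
From Stdlib Require Import Arith Lia.

Definition label : Type := (nat * nat * nat)%type.
Definition lab (a b c : nat) : label := (a, b, c).

Definition tile : Type := (label * label * label * label)%type.
Definition mk (a b c d : label) : tile := (a, b, c, d).
Definition RIGHT (t : tile) : label := let '(a, _, _, _) := t in a.
Definition TOP (t : tile) : label := let '(_, b, _, _) := t in b.
Definition LEFT (t : tile) : label := let '(_, _, c, _) := t in c.
Definition BOTTOM (t : tile) : label := let '(_, _, _, d) := t in d.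

Definition hat (t : tile) : tile := mk (TOP t) (RIGHT t) (BOTTOM t) (LEFT t).

Definition tileset := tile -> Prop.
Definition hatS (S : tileset) : tileset := fun t => exists u, S u /\ t = hat u.
Definition union (S T : tileset) : tileset := fun t => S t \/ T t.

Definition SW_det (S : tileset) : Prop := forall t t', S t -> S t' ->
  BOTTOM t = BOTTOM t' -> LEFT t = LEFT t' -> t = t'.
Definition NE_det (S : tileset) : Prop := forall t t', S t -> S t' ->
  TOP t = TOP t' -> RIGHT t = RIGHT t' -> t = t'.
Definition NW_det (S : tileset) : Prop := forall t t', S t -> S t' ->
  TOP t = TOP t' -> LEFT t = LEFT t' -> t = t'.
Definition SE_det (S : tileset) : Prop := forall t t', S t -> S t' ->
  BOTTOM t = BOTTOM t' -> RIGHT t = RIGHT t' -> t = t'.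

Definition W (n : nat) : tileset := fun t => exists i j,
  1 <= i <= n /\ 1 <= j <= n /\
  t = mk (lab 1 1 (i+1)) (lab 1 1 (j+1)) (lab 1 1 i) (lab 1 1 j).

Definition btile (n i : nat) : tile :=
  mk (lab 0 0 (i+1)) (lab 1 1 1) (lab 0 0 i) (lab 1 1 n).
Definition B' (n : nat) : tileset := fun t => exists i, i <= n /\ t = btile n i.
Definition B (n : nat) : tileset := fun t => exists i, i <= n - 1 /\ t = btile n i.

Definition G (n : nat) : tileset := fun t => exists i, i <= n /\
  t = mk (lab 0 1 (i+1)) (lab 1 1 1) (lab 0 0 i) (lab 1 1 (n+1)).

Definition Y (n : nat) : tileset := fun t => exists i, 1 <= i <= n /\
  t = mk (lab 0 1 (i+1)) (lab 1 1 2) (lab 0 1 i) (lab 1 1 (n+1)).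

Definition A (n : nat) : tileset := fun t => exists i, 1 <= i <= n /\
  t = mk (lab 0 0 (i+1)) (lab 1 1 2) (lab 0 1 i) (lab 1 1 n).

Definition jtile (n k l r s : nat) : tile :=
  mk (lab 0 k l) (lab 0 r s) (lab 0 s (r+n)) (lab 0 l (k+n)).
Definition okpair (k l : nat) : Prop :=
  (k = 0 /\ l = 0) \/ (k = 0 /\ l = 1) \/ (k = 1 /\ l = 1).
Definition J' (n : nat) : tileset := fun t => exists k l r s,
  okpair k l /\ okpair r s /\ t = jtile n k l r s.
Definition J (n : nat) : tileset := fun t => exists k l r s,
  okpair k l /\ okpair r s /\
  ~ (k = 0 /\ l = 0 /\ r = 1 /\ s = 1) /\ ~ (k = 1 /\ l = 1 /\ r = 0 /\ s = 0) /\
  t = jtile n k l r s.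

Definition Tp (n : nat) : tileset := fun t =>
  W n t \/ B' n t \/ G n t \/ Y n t \/ A n t \/
  hatS (B' n) t \/ hatS (G n) t \/ hatS (Y n) t \/ hatS (A n) t \/ J' n t.

Definition T (n : nat) : tileset := fun t =>
  W n t \/ B n t \/ G n t \/ Y n t \/
  hatS (B n) t \/ hatS (G n) t \/ hatS (Y n) t \/ J n t.

(* Every tile is determined by its (bottom, left) labels, and likewise by its
   (top, right) labels: the label prefixes 00/01/11 separate the families, and
   inside a family the index is read off one of the two labels.  On the other
   hand b_n^0 and the first tile of G_n share their top label 111 and their
   left label 000, so T_n is not NW-deterministic; as hat exchanges top/right
   and left/bottom, their hats witness that T_n is not SE-deterministic.  Both
   statements transfer between T_n and the larger set T'_n. *)
From Stdlib Require Import Arith Lia.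

Definition tileset_sub (S S' : tileset) : Prop := forall t, S t -> S' t.

Lemma SW_det_sub (S S' : tileset) : tileset_sub S S' -> SW_det S' -> SW_det S.
Proof. intros sub det t t' Ht Ht'; apply det; auto. Qed.

Lemma NE_det_sub (S S' : tileset) : tileset_sub S S' -> NE_det S' -> NE_det S.
Proof. intros sub det t t' Ht Ht'; apply det; auto. Qed.

Lemma NW_det_sub (S S' : tileset) : tileset_sub S S' -> NW_det S' -> NW_det S.
Proof. intros sub det t t' Ht Ht'; apply det; auto. Qed.

Lemma SE_det_sub (S S' : tileset) : tileset_sub S S' -> SE_det S' -> SE_det S.
Proof. intros sub det t t' Ht Ht'; apply det; auto. Qed.

Lemma hatK (t : tile) : hat (hat t) = t.
Proof. destruct t as [[[a b] c] d]; reflexivity. Qed.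

Lemma hatS_sub (S S' : tileset) : tileset_sub S S' -> tileset_sub (hatS S) (hatS S').
Proof. intros sub t [u [Hu ->]]; exists u; auto. Qed.

Lemma NW_det_of_SE_det_hatS (S : tileset) : SE_det (hatS S) -> NW_det S.
Proof.
  intros det t t' Ht Ht' Htop Hleft.
  rewrite <- (hatK t), <- (hatK t').
  f_equal; apply det; [exists t | exists t' | ..]; auto.
Qed.

Lemma not_NW_det (S : tileset) (t t' : tile) :
  S t -> S t' -> TOP t = TOP t' -> LEFT t = LEFT t' -> t <> t' -> ~ NW_det S.
Proof. intros Ht Ht' Htop Hleft neq det; exact (neq (det t t' Ht Ht' Htop Hleft)). Qed.

Lemma T_sub_Tp (n : nat) : tileset_sub (T n) (Tp n).
Proof.
  assert (B_sub : tileset_sub (B n) (B' n)).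
  { intros t [i [Hi ->]]; exists i; split; [lia | reflexivity]. }
  assert (J_sub : tileset_sub (J n) (J' n)).
  { intros t (k & l & r & s & Hkl & Hrs & _ & _ & ->); exists k, l, r, s; auto. }
  pose proof (hatS_sub _ _ B_sub) as hatB_sub.
  intros t; specialize (B_sub t); specialize (J_sub t); specialize (hatB_sub t).
  unfold T, Tp; tauto.
Qed.

Lemma B_G_sub_T (n : nat) : tileset_sub (union (B n) (G n)) (T n).
Proof. unfold T; intros t [Ht | Ht]; tauto. Qed.

Lemma hatS_B_G_sub_T (n : nat) : tileset_sub (hatS (union (B n) (G n))) (T n).
Proof.
  intros t [u [[Hu | Hu] ->]]; unfold T.
  - do 4 right; left; exists u; auto.
  - do 5 right; left; exists u; auto.
Qed.

Lemma B_G_not_NW_det (n : nat) : ~ NW_det (union (B n) (G n)).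
Proof.
  apply (not_NW_det _ (btile n 0)
           (mk (lab 0 1 1) (lab 1 1 1) (lab 0 0 0) (lab 1 1 (n + 1)))).
  - left; exists 0; split; [lia | reflexivity].
  - right; exists 0; split; [lia | reflexivity].
  - reflexivity.
  - reflexivity.
  - discriminate.
Qed.

Ltac destruct_tileset_membership :=
  repeat match goal with
  | H : _ \/ _ |- _ => destruct H
  | H : exists _, _ |- _ => destruct H
  | H : _ /\ _ |- _ => destruct H
  end.

Ltac decide_determinism :=
  intros t t' Ht Ht' H1 H2;
  unfold Tp, W, B', G, Y, A, J', hatS, okpair in *;
  destruct_tileset_membership; subst;
  cbn in H1, H2; inversion H1; inversion H2; subst;
  first [ reflexivity | exfalso; lia | repeat f_equal; lia ].

Lemma SW_det_Tp (n : nat) : SW_det (Tp n).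
Proof. decide_determinism. Qed.

Lemma NE_det_Tp (n : nat) : NE_det (Tp n).
Proof. decide_determinism. Qed.

Lemma T_not_NW_det (n : nat) : ~ NW_det (T n).
Proof. intros det; apply (B_G_not_NW_det n), (NW_det_sub _ _ (B_G_sub_T n)), det. Qed.

Lemma T_not_SE_det (n : nat) : ~ SE_det (T n).
Proof.
  intros det; apply (B_G_not_NW_det n), NW_det_of_SE_det_hatS.
  exact (SE_det_sub _ _ (hatS_B_G_sub_T n) det).
Qed.

Theorem lemma4p2 : forall n : nat, 1 <= n ->
  (SW_det (T n) /\ NE_det (T n) /\ SW_det (Tp n) /\ NE_det (Tp n)) /\
  (~ NW_det (T n) /\ ~ SE_det (T n) /\ ~ NW_det (Tp n) /\ ~ SE_det (Tp n)).
Proof.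
  intros n _.
  pose proof (SW_det_Tp n) as SW_Tp; pose proof (NE_det_Tp n) as NE_Tp.
  pose proof (T_not_NW_det n) as not_NW_T; pose proof (T_not_SE_det n) as not_SE_T.
  repeat split.
  - exact (SW_det_sub _ _ (T_sub_Tp n) SW_Tp).
  - exact (NE_det_sub _ _ (T_sub_Tp n) NE_Tp).
  - exact SW_Tp.
  - exact NE_Tp.
  - exact not_NW_T.
  - exact not_SE_T.
  - intros det; exact (not_NW_T (NW_det_sub _ _ (T_sub_Tp n) det)).
  - intros det; exact (not_SE_T (SE_det_sub _ _ (T_sub_Tp n) det)).
Qed.
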